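(* Let $n\ge2$ and let $\beta\in D_n$ have restricted sequence $(b_n,\ldots,b_1)$. Let $1\le j\le 2n-1$ with $j\notin\{b_n-1,b_n,b_n+1\}$, and let $(b'_{n-1},\ldots,b'_1)$ be the restricted sequence of $\tau_j(\beta)\in D_{n-1}$. Then: (1) if $j<b_n-1$, then $b'_{n-1}=b_n-2$; (2) if $j>b_n+1$, then $b'_{n-1}\le b_n$.
   Context: $D_n$ is the set of non-crossing perfect matchings of $\{1,\ldots,2n\}$ (non-crossing $n$-chord diagrams), $D_0=\{\phi\}$. For $1\le k\le 2n+1$, $l_k:D_n\to D_{n+1}$: $l_k(\alpha)$ matches $k$ with $k+1$, old point $i$ becomes $i$ if $i<k$ and $i+2$ if $i\ge k$. For $1\le j\le 2n-1$, $\tau_j:D_n\to D_{n-1}$: if $j$ is matched with $j+1$, delete this pair; otherwise, if $p$ is the partner of $j$ and $p'$ the partner of $j+1$, delete the pairs $\{j,p\},\{j+1,p'\}$ and add the pair $\{p,p'\}$; then renumber the remaining $2n-2$ points order-preservingly to $\{1,\ldots,2n-2\}$. Restricted sequence of $\alpha\in D_n$: let $k_n$ be the smallest $k$ with $k$ matched to $k+1$; the sequence is $(k_n,k_{n-1},\ldots,k_1)$ where $(k_{n-1},\ldots,k_1)$ is the restricted sequence of $\alpha$ with that arc removed (empty for $\phi$). *)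

From mathcomp Require Import all_boot.
Set Implicit Arguments. Unset Strict Implicit. Unset Printing Implicit Defensive.

(* A chord diagram on the points {1,...,2n} is encoded by its partner
   function p : nat -> nat (only the values on 1..2n matter). *)

Definition is_perfect_matching (n : nat) (p : nat -> nat) : Prop :=
  forall i, 1 <= i <= n.*2 ->
    [/\ 1 <= p i <= n.*2, p i != i & p (p i) = i].

Definition noncrossing (n : nat) (p : nat -> nat) : Prop :=
  forall a b, 1 <= a <= n.*2 -> 1 <= b <= n.*2 ->
    ~ (a < b /\ b < p a /\ p a < p b).

Definition D (n : nat) (p : nat -> nat) : Prop :=
  is_perfect_matching n p /\ noncrossing n p.

(* tau_j : D_n -> D_{n-1}.  New point i corresponds to old point
   (if i < j then i else i+2); old point x is renumbered to
   (if x < j then x else x-2). *)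
Definition tau (j : nat) (p : nat -> nat) : nat -> nat :=
  fun i =>
    let x := if i < j then i else i.+2 in
    let y := if p j == j.+1 then p x
             else if x == p j then p j.+1
             else if x == p j.+1 then p j
             else p x in
    if y < j then y else y - 2.

Definition first_arc (n : nat) (p : nat -> nat) : nat :=
  let s := iota 1 n.*2.-1 in nth 0 s (find (fun k => p k == k.+1) s).

(* restricted sequence (k_n, k_{n-1}, ..., k_1); removing the arc {k,k+1}
   is exactly tau_k. *)
Fixpoint restricted_seq (n : nat) (p : nat -> nat) : seq nat :=
  match n with
  | 0 => [::]
  | m.+1 => let k := first_arc n p in k :: restricted_seq m (tau k p)
  end.

From mathcomp Require Import all_boot.
From mathcomp Require Import zify.

(* Let b = b_n be the first short arc {b, b+1} of beta.  Every arc starting left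
   of b is a short arc or nests over a shorter one, so by minimality of b all
   points a < b have their partner beyond b+1.  Now tau_j removes the two
   points j, j+1 and keeps every other arc whose endpoints avoid the partners
   of j and j+1.  If j > b+1 the arc {b, b+1} survives unchanged, so the new
   first arc is at most b.  If j+1 < b, the arc {b, b+1} survives as
   {b-2, b-1}, while every point k < b-2 of tau_j(beta) comes from a point left
   of b and is matched beyond b-1, so b-2 is the new first arc. *)

Lemma first_arc_spec (n : nat) (p : nat -> nat) (c : nat) :
  1 <= c <= n.*2.-1 -> p c = c.+1 ->
  let b := first_arc n p in
  [/\ 1 <= b <= c, p b = b.+1 & forall k, 1 <= k < b -> p k != k.+1].
Proof.
move=> c_range pc /=; rewrite /first_arc.
set s := iota 1 n.*2.-1; set P := fun k => p k == k.+1.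
have has_c : has P s by apply/hasP; exists c; rewrite ?mem_iota /P ?pc //; lia.
have find_lt : find P s < size s by rewrite -has_find.
rewrite size_iota in find_lt.
have nth_s k : k < n.*2.-1 -> nth 0 s k = k.+1 by move=> ?; rewrite nth_iota ?add1n.
have not_before k : 1 <= k <= find P s -> p k != k.+1.
  move=> k_range; have k_lt : k.-1 < find P s by lia.
  by have := before_find 0 k_lt; rewrite nth_s /P ?prednK; [move/negbT | lia..].
rewrite nth_s //; split=> //.
- suff : find P s < c by lia.
  rewrite ltnNge; apply/negP => le; have c_before : 1 <= c <= find P s by lia.
  by have := not_before c c_before; rewrite pc eqxx.
- by have /eqP := nth_find 0 has_c; rewrite nth_s.
Qed.

Lemma tau_untouched {j : nat} {p : nat -> nat} {i : nat} (x : nat) :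
  x = (if i < j then i else i.+2) -> x != p j -> x != p j.+1 ->
  tau j p i = (if p x < j then p x else p x - 2).
Proof. by move=> -> xNpj xNpj1; rewrite /tau (negbTE xNpj) (negbTE xNpj1) if_same. Qed.

Section FirstArc.

Context {n : nat} {p : nat -> nat}.
Hypotheses (Dp : D n p) (n_gt0 : 0 < n).

Lemma short_arc_under (a : nat) : 1 <= a <= n.*2 -> a < p a ->
  exists2 k, a <= k < p a & p k = k.+1.
Proof.
have [pm nc] := Dp.
move: {2}(p a - a) (leqnn (p a - a)) => d; elim: d a => [|d IH] a gap a_range lt_a.
  lia.
have [pa_range _ ppa] := pm a a_range.
have [paS|paNS] := eqVneq (p a) a.+1; first by exists a; rewrite ?paS //; lia.
have a1_range : 1 <= a.+1 <= n.*2 by lia.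
have [pa1_range pa1N ppa1] := pm a.+1 a1_range.
have pa1Na : p a.+1 != a by apply: contra_neq paNS => E; rewrite -{1}E ppa1.
have pa1Npa : p a.+1 != p a by apply/eqP => E; have := ppa1; rewrite E ppa; lia.
have [pa1_lt | pa1_gt] := ltnP (p a.+1) a.+1.
  by case: (nc _ _ pa1_range a_range); rewrite ppa1; lia.
have no_cross := nc _ _ a_range a1_range.
have gap1 : p a.+1 - a.+1 <= d by lia.
have lt_a1 : a.+1 < p a.+1 by lia.
have [k k_range pk] := IH a.+1 gap1 a1_range lt_a1.
by exists k => //; lia.
Qed.

Let b := first_arc n p.

Lemma first_arc_min_short :
  [/\ 1 <= b <= n.*2.-1, p b = b.+1 & forall k, 1 <= k < b -> p k != k.+1].
Proof.
have one_range : 1 <= 1 <= n.*2 by lia.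
have [p1_range p1N1 _] := Dp.1 1 one_range.
have p1_gt1 : 1 < p 1 by lia.
have [c c_range pc] := short_arc_under 1 one_range p1_gt1.
have c_range' : 1 <= c <= n.*2.-1 by lia.
have [b_range pb b_min] := first_arc_spec n p c c_range' pc.
by split=> //; lia.
Qed.

Lemma partner_beyond_first_arc (a : nat) : 1 <= a < b -> b.+1 < p a.
Proof.
move=> a_range; have [b_range pb b_min] := first_arc_min_short.
have beyond x : 1 <= x <= n.*2 -> x < p x -> b <= p x.
  move=> x_range lt_x; have [k k_range pk] := short_arc_under x x_range lt_x.
  by case: leqP => // lt_px; have := b_min k; rewrite pk eqxx; lia.
have a_range' : 1 <= a <= n.*2 by lia.
have [pa_range paNa ppa] := Dp.1 a a_range'.
have b_range' : 1 <= b <= n.*2 by lia.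
have [_ _ ppb] := Dp.1 b b_range'.
have pa_not_b : p a != b by apply/eqP => E; have := ppa; rewrite E pb; lia.
have pa_not_b1 : p a != b.+1 by apply/eqP => E; have := ppa; rewrite E -{1}pb ppb; lia.
have [pa_lt | pa_gt] := ltnP (p a) a.
  have := beyond _ pa_range; rewrite ppa; lia.
have := beyond _ a_range'; lia.
Qed.

Lemma first_arc_tau_left (j : nat) : 1 <= j -> j.+1 < b -> first_arc n.-1 (tau j p) = b - 2.
Proof.
move=> j_ge1 j_lt; have [b_range pb b_min] := first_arc_min_short.
have j_range : 1 <= j < b by lia.
have j1_range : 1 <= j.+1 < b by lia.
have pj := partner_beyond_first_arc j j_range.
have pj1 := partner_beyond_first_arc j.+1 j1_range.
have tau_b : tau j p (b - 2) = (b - 2).+1.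
  rewrite (tau_untouched b) ?pb; try (case: ifP => ?); lia.
have tau_no_short k : 1 <= k < b - 2 -> tau j p k != k.+1.
  move=> k_range; set x := if k < j then k else k.+2.
  have x_range : 1 <= x < b by rewrite /x; case: ifP => ?; lia.
  have px := partner_beyond_first_arc x x_range.
  rewrite (tau_untouched x) //; try (case: ifP => ?); lia.
have c_range : 1 <= b - 2 <= (n.-1).*2.-1 by lia.
have [f_range pf _] := first_arc_spec n.-1 (tau j p) (b - 2) c_range tau_b.
set f := first_arc _ _ in f_range pf *.
suff : ~~ (f < b - 2) by lia.
apply/negP => f_lt; have f_range' : 1 <= f < b - 2 by lia.
by have := tau_no_short f f_range'; rewrite pf eqxx.
Qed.

Lemma first_arc_tau_right (j : nat) : b.+1 < j -> j <= n.*2.-1 -> first_arc n.-1 (tau j p) <= b.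
Proof.
move=> j_gt j_le; have [b_range pb _] := first_arc_min_short.
have b_not_partner x : 1 <= x <= n.*2 -> b.+1 != x -> b != p x.
  move=> x_range; apply: contra_neq => b_px.
  by have [_ _ ppx] := Dp.1 x x_range; rewrite -ppx -b_px pb.
have tau_b : tau j p b = b.+1.
  rewrite (tau_untouched b) ?pb ?b_not_partner; try (case: ifP => ?); lia.
have c_range : 1 <= b <= (n.-1).*2.-1 by lia.
by have [f_range _ _] := first_arc_spec n.-1 (tau j p) b c_range tau_b; lia.
Qed.

End FirstArc.

Theorem mainTheorem4 (n : nat) (beta : nat -> nat) (j : nat) :
  2 <= n -> D n beta ->
  1 <= j <= n.*2.-1 ->
  j \notin [:: (nth 0 (restricted_seq n beta) 0).-1;
               nth 0 (restricted_seq n beta) 0;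
               (nth 0 (restricted_seq n beta) 0).+1] ->
  let b_n := nth 0 (restricted_seq n beta) 0 in
  let b'_n1 := nth 0 (restricted_seq n.-1 (tau j beta)) 0 in
  (j < b_n.-1 -> b'_n1 = b_n - 2) /\
  (b_n.+1 < j -> b'_n1 <= b_n).
Proof.
move=> n_ge2 Dbeta j_range.
have head_first_arc m q : 0 < m -> nth 0 (restricted_seq m q) 0 = first_arc m q.
  by case: m.
rewrite !head_first_arc; try lia.
(* The excluded values of j are already ruled out by the hypotheses of each case. *)
move=> _ /=; have n_gt0 : 0 < n by lia.
split=> j_lt.
- by apply: (first_arc_tau_left Dbeta n_gt0); lia.
- by apply: (first_arc_tau_right Dbeta n_gt0); lia.
Qed.
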